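(* Suppose $h=h^{(0)}::h^{(1)}$ is the concatenation of two constant $\ell$-bit streams and $x$ is a uniformly distributed $\ell$-bit stream. Then (a) $G(h\vdash x\boxplus h)_\ell=2^{|\kappa h|-\ell}$; (b) $G(x,h\vdash x\boxplus h)=G(x^{\circledast\kappa h},h\vdash x\boxplus h)$.
   Context: For $x\in\mathbb{Z}_2^\ell$ and $h=h^{(0)}::h^{(1)}$ with $h^{(0)},h^{(1)}\in\mathbb{Z}_2^\ell$, $(x\boxplus h)_i=h^{(x_i)}_i$. The kernel is $\kappa h=\{i\mid h^{(0)}_i=h^{(1)}_i\}$. For $I\subseteq\{0,\dots,\ell-1\}$, $x^{\circledast I}$ is the string obtained from $x$ by replacing each bit $x_i$, $i\in I$, by a wildcard symbol $\circledast$. $G(\Xi\vdash\Theta)$ is the guessing chance: the maximal (over randomized guessing functions) fraction of random choices of the random values (here $x$) for which the function outputs $\Theta$ on input $\Xi$, as a sequence in $\ell$ considered up to negligible difference. *)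

From HB Require Import structures.
From mathcomp Require Import all_boot all_order all_algebra.
From mathcomp Require Import boolp classical_sets reals.
Set Implicit Arguments. Unset Strict Implicit. Unset Printing Implicit Defensive.
Import Order.TTheory GRing.Theory Num.Theory.
Local Open Scope ring_scope.
Local Open Scope classical_set_scope.

Definition bits (l : nat) := {ffun 'I_l -> bool}.

(* h = h0 :: h1, represented as the pair (h0, h1) *)
Definition boxplus (l : nat) (x : bits l) (h : bits l * bits l) : bits l :=
  [ffun i => if x i then h.2 i else h.1 i].

Definition kernel (l : nat) (h : bits l * bits l) : {set 'I_l} :=
  [set i | h.1 i == h.2 i].

Definition wildcard (l : nat) (x : bits l) (I : {set 'I_l}) : {ffun 'I_l -> option bool} :=
  [ffun i => if i \in I then None else Some (x i)].

Definition is_distr (R : realType) (O : finType) (d : {ffun O -> R}) : Prop :=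
  (forall o, 0 <= d o) /\ \sum_o d o = 1.

Definition rguesser (R : realType) (I O : finType) (f : I -> {ffun O -> R}) : Prop :=
  forall i, is_distr (f i).

(* success probability of guesser f, with the random value x uniform over X,
   input Xi x and target Th x *)
Definition success (R : realType) (X I O : finType)
  (Xi : X -> I) (Th : X -> O) (f : I -> {ffun O -> R}) : R :=
  (#|X|%:R)^-1 * \sum_x f (Xi x) (Th x).

(* guessing chance G(Xi |- Th): maximal success probability over all
   randomized guessing functions (supremum; it is attained) *)
Definition guess_chance (R : realType) (X I O : finType)
  (Xi : X -> I) (Th : X -> O) : R :=
  sup [set success Xi Th f | f in [set f | rguesser f]].

(* A guesser that only sees h must output a single guess for the uniformly
   random x ⊞ h.  Bits outside the kernel of h reveal the corresponding bit of
   x, bits inside it do not depend on x, so every fibre of x ↦ x ⊞ h is either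
   empty or a subcube of dimension |κh|; the best guess hits a full fibre, with
   probability 2^|κh| / 2^ℓ.  Given x itself (or x with its kernel bits
   erased) the guesser can compute x ⊞ h exactly, so both sides of (b) are 1. *)
From HB Require Import structures.
From mathcomp Require Import all_boot all_order all_algebra.
From mathcomp Require Import boolp classical_sets reals.
Import Order.TTheory GRing.Theory Num.Theory.
Local Open Scope ring_scope.
Set Implicit Arguments. Unset Strict Implicit.

Section GuessingChance.
Variable R : realType.

Lemma sup_eq_max (S : set R) m : S m -> (forall s, S s -> s <= m) -> sup S = m.
Proof.
move=> Sm ubm; apply/eqP; rewrite eq_le; apply/andP; split.
  by apply: ge_sup; [exists m|].
by apply: sup_upper_bound => //; split; [exists m | exists m].
Qed.

Lemma distr_le1 (O : finType) (d : {ffun O -> R}) o : is_distr d -> d o <= 1.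
Proof. by move=> [d_ge0 <-]; rewrite (bigD1 o) //= lerDl sumr_ge0. Qed.

Lemma success_le1 (X I O : finType) (Xi : X -> I) (Th : X -> O)
    (f : I -> {ffun O -> R}) :
  rguesser f -> success Xi Th f <= 1.
Proof.
move=> guess_f; rewrite /success.
have [->|X_neq0] := eqVneq #|X| 0%N; first by rewrite invr0 mul0r.
rewrite ler_pdivrMl ?ltr0n ?lt0n // mulr1.
apply: le_trans (_ : \sum_(x : X) (1 : R) <= _); last by rewrite sumr_const.
by apply: ler_sum => x _; apply: distr_le1.
Qed.

Definition point_guesser (I O : finType) (g : I -> O) : I -> {ffun O -> R} :=
  fun i => [ffun o => (o == g i)%:R].

Lemma point_guesser_rguesser (I O : finType) (g : I -> O) :
  rguesser (point_guesser g).
Proof.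
move=> i; split=> [o|]; first by rewrite ffunE ler0n.
rewrite (bigD1 (g i)) //= ffunE eqxx big1 ?addr0 // => o /negbTE o_neq.
by rewrite ffunE o_neq.
Qed.

Lemma guess_chance_eq1 (X I O : finType) (Xi : X -> I) (Th : X -> O)
    (g : I -> O) :
  (0 < #|X|)%N -> (forall x, g (Xi x) = Th x) -> @guess_chance R _ _ _ Xi Th = 1.
Proof.
move=> X_gt0 gXi; apply: sup_eq_max => [|_ [f guess_f <-]]; last first.
  exact: success_le1.
exists (point_guesser g); first exact: point_guesser_rguesser.
rewrite /success (eq_bigr (fun _ => 1)) => [|x _]; last by rewrite ffunE gXi eqxx.
by rewrite sumr_const mulVf // pnatr_eq0 -lt0n.
Qed.

Lemma sum_comp_fibres (X O : finType) (Th : X -> O) (d : O -> R) :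
  \sum_x d (Th x) = \sum_o d o * #|[pred x | Th x == o]|%:R.
Proof.
rewrite (partition_big Th predT) //=; apply: eq_bigr => o _.
by rewrite (eq_bigr (fun _ => d o)) => [|x /eqP ->//]; rewrite sumr_const mulr_natr.
Qed.

(* With constant input, a guesser's best move is to put all its weight on a
   largest fibre of the target. *)
Lemma guess_chance_const_input (X I O : finType) (i0 : I) (Th : X -> O)
    (o0 : O) (m : nat) :
  (forall o, #|[pred x | Th x == o]| <= m)%N ->
  #|[pred x | Th x == o0]| = m ->
  @guess_chance R _ _ _ (fun _ => i0) Th = (#|X|%:R)^-1 * m%:R.
Proof.
move=> fibre_le fibre_o0; apply: sup_eq_max => [|_ [f guess_f <-]].
  exists (point_guesser (fun _ => o0)); first exact: point_guesser_rguesser.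
  rewrite /success sum_comp_fibres (bigD1 o0) //= ffunE eqxx mul1r fibre_o0.
  by rewrite big1 ?addr0 // => o /negbTE o_neq; rewrite ffunE o_neq mul0r.
have [d_ge0 d_sum1] := guess_f i0.
rewrite /success; apply: ler_wpM2l; first by rewrite invr_ge0 ler0n.
rewrite sum_comp_fibres.
apply: le_trans (_ : \sum_o f i0 o * m%:R <= _).
  by apply: ler_sum => o _; apply: ler_wpM2l; rewrite ?ler_nat.
by rewrite -mulr_suml d_sum1 mul1r.
Qed.

End GuessingChance.

Lemma card_bits l : #|bits l| = (2 ^ l)%N.
Proof. by rewrite card_ffun card_bool card_ord. Qed.

Definition fixed_off l (K : {set 'I_l}) (c : bits l) : 'I_l -> pred bool :=
  fun i => if i \in K then predT else pred1 (c i).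

Lemma card_fixed_off l (K : {set 'I_l}) (c : bits l) :
  #|(family (fixed_off K c) : simpl_pred (bits l))| = (2 ^ #|K|)%N.
Proof.
rewrite card_family foldrE big_map big_enum /=.
rewrite (eq_bigr (fun i => if i \in K then 2%N else 1%N)) => [|i _]; last first.
  by rewrite /fixed_off; case: ifP; rewrite ?card_bool ?card1.
by rewrite -big_mkcond prod_nat_const.
Qed.

Lemma boxplus_fibre l (h : bits l * bits l) (z : bits l) :
  [pred x : bits l | boxplus x h == boxplus z h] =i family (fixed_off (kernel h) z).
Proof.
move=> x; rewrite !inE; apply/eqP/familyP => [xz i | xz].
  have := congr1 (fun y : bits l => y i) xz; rewrite /fixed_off !ffunE !inE.
  case: eqP => [_ _|h_neq]; rewrite inE //.
  by case: (x i) (z i) => -[] //= e; case: h_neq.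
apply/ffunP => i; rewrite !ffunE; have := xz i; rewrite /fixed_off inE.
case: eqP => [-> _|_]; first by case: ifP; case: ifP.
by rewrite inE => /eqP ->.
Qed.

Lemma card_boxplus_fibre l (h : bits l * bits l) (z : bits l) :
  #|[pred x : bits l | boxplus x h == boxplus z h]| = (2 ^ #|kernel h|)%N.
Proof. by rewrite (eq_card (boxplus_fibre h z)) card_fixed_off. Qed.

Lemma card_boxplus_fibre_le l (h : bits l * bits l) (y : bits l) :
  (#|[pred x : bits l | boxplus x h == y]| <= 2 ^ #|kernel h|)%N.
Proof.
case: (pickP [pred x : bits l | boxplus x h == y]) => [z /eqP <- | no_x].
  by rewrite card_boxplus_fibre.
by rewrite (eq_card0 no_x).
Qed.

Definition unwildcard l (w : {ffun 'I_l -> option bool}) (h : bits l * bits l) :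
  bits l := [ffun i => if w i is Some b then (if b then h.2 i else h.1 i)
                       else h.1 i].

Lemma unwildcard_kernel l (x : bits l) (h : bits l * bits l) :
  unwildcard (wildcard x (kernel h)) h = boxplus x h.
Proof.
apply/ffunP => i; rewrite !ffunE inE.
by case: ifP => // /eqP ->; case: (x i).
Qed.

Theorem proposition5p6 (R : realType) (l : nat) (h : bits l * bits l) :
  @guess_chance R _ _ _ (fun x : bits l => h) (fun x : bits l => boxplus x h)
    = (2 : R) ^ (#|kernel h|%:Z - l%:Z)
  /\
  @guess_chance R _ _ _ (fun x : bits l => (x, h)) (fun x : bits l => boxplus x h)
    = @guess_chance R _ _ _ (fun x : bits l => (wildcard x (kernel h), h))
                            (fun x : bits l => boxplus x h).
Proof.
have bits_gt0 : (0 < #|bits l|)%N by rewrite card_bits expn_gt0.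
split.
  rewrite (guess_chance_const_input _ _ (card_boxplus_fibre_le h)
             (card_boxplus_fibre h [ffun=> false])) card_bits.
  by rewrite expfzDr ?pnatr_eq0 // -exprnN !natrX mulrC.
rewrite (@guess_chance_eq1 _ _ _ _ _ _ (fun p => boxplus p.1 p.2)) //.
by rewrite (@guess_chance_eq1 _ _ _ _ _ _ (fun p => unwildcard p.1 p.2))
  // => x; apply: unwildcard_kernel.
Qed.
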